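(* For $m\ge 2$ there is an injective $\mathcal R$-morphism $g:C_m'\to C_2'$ such that for all $i,j<m$, \[ g(p_i)\cdot g(q_j)=\delta_{i,j}\quad\text{and}\quad p_0\cdot g(q_j)=0=g(p_i)\cdot q_0, \] where $p_i,q_j$ denote the congruence classes of $\{p_i\},\{q_j\}$ in $C_m'$ and in $C_2'$ respectively.
   Context: An $\mathcal R$-dioid is a dioid in which every regular subset of its multiplicative monoid has a supremum $\sum A$ with $\sum(AB)=(\sum A)(\sum B)$ (equivalently a $*$-continuous Kleene algebra); an $\mathcal R$-morphism is a dioid morphism preserving suprema of regular sets; an $\mathcal R$-congruence is a semiring congruence $\rho$ such that regular sets with equal downward closures modulo $\rho$ have congruent suprema. For $k\ge1$, $\Delta_k=\{p_0,\dots,p_{k-1},q_0,\dots,q_{k-1}\}$ and the polycyclic $\mathcal R$-dioid is $C_k'=\mathcal R\Delta_k^*/\rho$, where $\mathcal R\Delta_k^*$ is the algebra of regular languages over $\Delta_k$ and $\rho$ the least $\mathcal R$-congruence containing $p_iq_j=\delta_{i,j}$ for $i,j<k$ ($\delta$ the Kronecker delta). *)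

From mathcomp Require Import ssreflect ssrfun ssrbool eqtype ssrnat seq fintype.
From Stdlib Require List.


Set Implicit Arguments.
Unset Strict Implicit.
Unset Printing Implicit Defensive.

Inductive star (T : Type) (mul : T -> T -> T) (one : T) (A : T -> Prop)
  : T -> Prop :=
| star_one : star mul one A one
| star_mul x a : star mul one A x -> A a -> star mul one A (mul x a).

Inductive regular (T : Type) (mul : T -> T -> T) (one : T)
  : (T -> Prop) -> Prop :=
| reg_fin (l : list T) : regular mul one (fun x => List.In x l)
| reg_union A B : regular mul one A -> regular mul one B ->
    regular mul one (fun x => A x \/ B x)
| reg_prod A B : regular mul one A -> regular mul one B ->
    regular mul one (fun x => exists a b, A a /\ B b /\ x = mul a b)
| reg_star A : regular mul one A -> regular mul one (star mul one A)
| reg_ext A B : regular mul one A -> (forall x, A x <-> B x) ->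
    regular mul one B.

(* Dioids presented as a carrier with an equivalence (setoid), so that *)
(* quotients D/rho are represented by representatives with equality rho.*)
Record sdioid := SDioid {
  car : Type;
  deq : car -> car -> Prop;
  dadd : car -> car -> car;
  dmul : car -> car -> car;
  dzero : car;
  done : car }.
Arguments car : clear implicits.
Arguments deq : clear implicits.
Arguments dadd : clear implicits.
Arguments dmul : clear implicits.
Arguments dzero : clear implicits.
Arguments done : clear implicits.

Definition dle (D : sdioid) (x y : car D) : Prop := deq D (dadd D x y) y.
Arguments dle : clear implicits.

Definition is_sup (D : sdioid) (A : car D -> Prop) (s : car D) : Prop :=
  (forall a, A a -> dle D a s) /\
  (forall u, (forall a, A a -> dle D a u) -> dle D s u).
Arguments is_sup : clear implicits.

Definition dregular (D : sdioid) (A : car D -> Prop) : Prop :=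
  regular (dmul D) (done D) A.
Arguments dregular : clear implicits.

Definition R_morphism (D1 D2 : sdioid) (f : car D1 -> car D2) : Prop :=
  (forall x y, deq D1 x y -> deq D2 (f x) (f y)) /\
  deq D2 (f (dzero D1)) (dzero D2) /\
  deq D2 (f (done D1)) (done D2) /\
  (forall x y, deq D2 (f (dadd D1 x y)) (dadd D2 (f x) (f y))) /\
  (forall x y, deq D2 (f (dmul D1 x y)) (dmul D2 (f x) (f y))) /\
  (forall (A : car D1 -> Prop) (s : car D1), dregular D1 A -> is_sup D1 A s ->
     is_sup D2 (fun y => exists x, A x /\ y = f x) (f s)).

Definition d_injective (D1 D2 : sdioid) (f : car D1 -> car D2) : Prop :=
  forall x y, deq D2 (f x) (f y) -> deq D1 x y.
Arguments d_injective : clear implicits.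
Arguments R_morphism : clear implicits.

Definition is_Rcong (D : sdioid) (R : car D -> car D -> Prop) : Prop :=
  (forall x y, deq D x y -> R x y) /\
  (forall x, R x x) /\
  (forall x y, R x y -> R y x) /\
  (forall x y z, R x y -> R y z -> R x z) /\
  (forall x x' y y', R x x' -> R y y' -> R (dadd D x y) (dadd D x' y')) /\
  (forall x x' y y', R x x' -> R y y' -> R (dmul D x y) (dmul D x' y')) /\
  (forall (A B : car D -> Prop), dregular D A -> dregular D B ->
     (* equal downward closures modulo R *)
     (forall x, (exists a, A a /\ R (dadd D x a) a) <->
                (exists b, B b /\ R (dadd D x b) b)) ->
     forall s t, is_sup D A s -> is_sup D B t -> R s t).
Arguments is_Rcong : clear implicits.

Definition Delta (k : nat) : Type := ('I_k + 'I_k)%type.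
Definition word (k : nat) : Type := seq (Delta k).
Definition lang (k : nat) : Type := word k -> Prop.

Definition regular_lang (k : nat) (L : lang k) : Prop :=
  regular (@cat (Delta k)) (@nil (Delta k)) L.

Definition RegLang (k : nat) : Type := {L : lang k | regular_lang L}.

Definition lzero (k : nat) : lang k := fun _ => False.
Arguments lzero : clear implicits.
Definition lone (k : nat) : lang k := fun w => w = [::].
Arguments lone : clear implicits.
Definition lletter (k : nat) (a : Delta k) : lang k := fun w => w = [:: a].
Definition lunion (k : nat) (L M : lang k) : lang k := fun w => L w \/ M w.
Definition lcat (k : nat) (L M : lang k) : lang k :=
  fun w => exists u v, L u /\ M v /\ w = cat u v.

Lemma reg_lzero k : regular_lang (lzero k).
Proof. apply: (reg_ext (reg_fin _ _ [::])) => x /=; split => //. Qed.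

Lemma reg_lone k : regular_lang (lone k).
Proof.
apply: (reg_ext (reg_fin _ _ [:: [::]])) => x /=; rewrite /lone.
by split; [case=> // <- | move=> ->; left].
Qed.

Lemma reg_lletter k (a : Delta k) : regular_lang (lletter a).
Proof.
apply: (reg_ext (reg_fin _ _ [:: [:: a]])) => x /=; rewrite /lletter.
by split; [case=> // <- | move=> ->; left].
Qed.

Lemma reg_lunion k (L M : lang k) :
  regular_lang L -> regular_lang M -> regular_lang (lunion L M).
Proof. exact: reg_union. Qed.

Lemma reg_lcat k (L M : lang k) :
  regular_lang L -> regular_lang M -> regular_lang (lcat L M).
Proof. exact: reg_prod. Qed.

Definition rzero (k : nat) : RegLang k := exist _ (lzero k) (reg_lzero k).
Definition rone (k : nat) : RegLang k := exist _ (lone k) (reg_lone k).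
Definition rletter (k : nat) (a : Delta k) : RegLang k :=
  exist _ (lletter a) (reg_lletter a).
Definition runion (k : nat) (L M : RegLang k) : RegLang k :=
  exist _ (lunion (proj1_sig L) (proj1_sig M))
          (reg_lunion (proj2_sig L) (proj2_sig M)).
Definition rcat (k : nat) (L M : RegLang k) : RegLang k :=
  exist _ (lcat (proj1_sig L) (proj1_sig M))
          (reg_lcat (proj2_sig L) (proj2_sig M)).

Definition rp (k : nat) (i : 'I_k) : RegLang k := rletter (inl i).
Definition rq (k : nat) (j : 'I_k) : RegLang k := rletter (inr j).

Definition RDelta (k : nat) : sdioid :=
  @SDioid (RegLang k) (fun L M => forall w, proj1_sig L w <-> proj1_sig M w)
          (@runion k) (@rcat k) (rzero k) (rone k).

Definition rho (k : nat) (L M : RegLang k) : Prop :=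
  forall R : RegLang k -> RegLang k -> Prop,
    is_Rcong (RDelta k) R ->
    (forall i j : 'I_k, R (rcat (rp i) (rq j)) (if i == j then rone k else rzero k)) ->
    R L M.

Definition Cprime (k : nat) : sdioid :=
  @SDioid (RegLang k) (@rho k) (@runion k) (@rcat k) (rzero k) (rone k).

From mathcomp Require Import ssreflect ssrfun ssrbool eqtype ssrnat seq fintype.
From Stdlib Require List.

Set Implicit Arguments.
Unset Strict Implicit.
Unset Printing Implicit Defensive.

(** Every word over Delta_k reduces, by the rules p_i q_j -> delta_ij, either to 0 or
    to a unique word q_u p_v, its normal form.  Two regular languages are
    rho-equivalent exactly when they have the same sets of normal forms: having the
    same normal forms is itself an R-congruence satisfying the relations, and
    conversely every such R-congruence identifies each word with its normal form,
    while a regular language is the supremum of the regular family of its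
    singletons.  The substitution q_j |-> q_1 q_0^j q_1, p_i |-> p_1 p_0^i p_1 maps
    normal forms injectively to normal forms, so the map it induces on languages is
    an injective R-morphism C_m' -> C_2' with the required products. *)

Section RegularImage.
Variables (T U : Type) (mulT : T -> T -> T) (oneT : T) (mulU : U -> U -> U) (oneU : U).
Variables (f : T -> U) (E : U -> U -> Prop).
Hypothesis E_refl : forall y, E y y.
Hypothesis E_trans : forall x y z, E x y -> E y z -> E x z.
Hypothesis E_mul : forall x x' y y', E x x' -> E y y' -> E (mulU x y) (mulU x' y').
Hypothesis f_one : E oneU (f oneT).
Hypothesis f_mul : forall x y, E (mulU (f x) (f y)) (f (mulT x y)).

Lemma regular_image_up_to A : regular mulT oneT A ->
  exists2 B, regular mulU oneU B &
    (forall b, B b -> exists2 a, A a & E b (f a)) /\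
    (forall a, A a -> exists2 b, B b & E b (f a)).
Proof.
have E_fmul a1 a2 b1 b2 : E b1 (f a1) -> E b2 (f a2) -> E (mulU b1 b2) (f (mulT a1 a2)).
  by move=> h1 h2; apply: E_trans (E_mul h1 h2) (f_mul _ _).
elim=> {A} [l | A B _ [A' hA' [A1 A2]] _ [B' hB' [B1 B2]]
           | A B _ [A' hA' [A1 A2]] _ [B' hB' [B1 B2]] | A _ [A' hA' [A1 A2]]
           | A B _ [A' hA' [A1 A2]] hAB].
- exists (fun y => List.In y (List.map f l)); first exact: reg_fin.
  split=> [b /List.in_map_iff [a [<- ha]] | a ha]; first by exists a.
  by exists (f a); first exact: List.in_map.
- exists (fun y => A' y \/ B' y); first exact: reg_union.
  split=> [b [/A1 | /B1] [a ha hb] | a [/A2 | /B2] [b hb hab]];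
    by [exists a; [left | ] | exists a; [right | ] | exists b; [left | ] | exists b; [right | ]].
- exists (fun y => exists b1 b2, A' b1 /\ B' b2 /\ y = mulU b1 b2); first exact: reg_prod.
  split=> [_ [b1 [b2 [/A1 [a1 h1 e1] [/B1 [a2 h2 e2] ->]]]]
         | _ [a1 [a2 [/A2 [b1 h1 e1] [/B2 [b2 h2 e2] ->]]]]].
  + by exists (mulT a1 a2); [exists a1, a2 | apply: E_fmul].
  + by exists (mulU b1 b2); [exists b1, b2 | apply: E_fmul].
- exists (star mulU oneU A'); first exact: reg_star.
  split.
  + move=> b; elim=> [|x {}b _ [a ha ex] /A1 [a' ha' eb]].
      by exists oneT; first exact: star_one.
    by exists (mulT a a'); [apply: star_mul | apply: E_fmul].
  + move=> a; elim=> [|x {}a _ [b hb ex] /A2 [b' hb' ea]].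
      by exists oneU; first exact: star_one.
    by exists (mulU b b'); [apply: star_mul | apply: E_fmul].
- by exists A' => //; split=> [b /A1 [a /hAB ha] | a /hAB /A2]; first exists a.
Qed.
End RegularImage.

Lemma regular_image (T U : Type) (mulT : T -> T -> T) (oneT : T)
    (mulU : U -> U -> U) (oneU : U) (f : T -> U) (A : T -> Prop) :
  (forall x y, f (mulT x y) = mulU (f x) (f y)) -> f oneT = oneU ->
  regular mulT oneT A -> regular mulU oneU (fun y => exists2 x, A x & y = f x).
Proof.
move=> f_mul f_one hA.
have E_mul x x' y y' : x = x' -> y = y' -> mulU x y = mulU x' y' by move=> -> ->.
have [B hB [B_A A_B]] := regular_image_up_to (@erefl U) (@eq_trans U) E_mul
  (esym f_one) (fun x y => esym (f_mul x y)) hA.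
apply: reg_ext hB _ => y; split; first exact: B_A.
by case=> x /A_B [b hb <-] ->.
Qed.

Section Languages.
Variable k : nat.
Implicit Types (L M : RegLang k) (u v w : word k).

Lemma deq_refl L : deq (RDelta k) L L.
Proof. by []. Qed.

Lemma deq_sym L M : deq (RDelta k) L M -> deq (RDelta k) M L.
Proof. by move=> h w; rewrite h. Qed.

Lemma deq_trans L M N : deq (RDelta k) L M -> deq (RDelta k) M N -> deq (RDelta k) L N.
Proof. by move=> h1 h2 w; rewrite h1 h2. Qed.

Lemma rcat_deq L L' M M' : deq (RDelta k) L L' -> deq (RDelta k) M M' ->
  deq (RDelta k) (rcat L M) (rcat L' M').
Proof.
by move=> hL hM w; split=> -[u [v [/hL hu [/hM hv ->]]]]; exists u, v.
Qed.

Lemma rcat1l L : deq (RDelta k) (rcat (rone k) L) L.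
Proof. by move=> w; split=> [[_ [v [-> [hv ->]]]] // | hw]; exists [::], w. Qed.

Lemma rcat0l L : deq (RDelta k) (rcat (rzero k) L) (rzero k).
Proof. by move=> w; split=> // -[u [v []]]. Qed.

Lemma rcat0r L : deq (RDelta k) (rcat L (rzero k)) (rzero k).
Proof. by move=> w; split=> // -[u [v [_ []]]]. Qed.

Lemma regular_lang_sing w : regular_lang (fun w' => w' = w).
Proof.
apply: (reg_ext (reg_fin _ _ [:: w])) => w' /=.
by split=> [[] | ->]; [move=> -> | case | left].
Qed.

Definition sing w : RegLang k := exist _ (fun w' => w' = w) (regular_lang_sing w).

Lemma rletter_sing x : deq (RDelta k) (rletter x) (sing [:: x]).
Proof. by []. Qed.

Lemma rcat_sing u v : deq (RDelta k) (rcat (sing u) (sing v)) (sing (u ++ v)).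
Proof. by move=> w; split=> [[_ [_ [-> [-> ->]]]] | ->] //; exists u, v. Qed.

Definition sing_family L (A : RegLang k -> Prop) : Prop :=
  (forall a, A a -> exists2 w, proj1_sig L w & deq (RDelta k) a (sing w)) /\
  (forall w, proj1_sig L w -> exists2 a, A a & deq (RDelta k) a (sing w)).

Lemma regular_sing_family L :
  exists2 A, dregular (RDelta k) A & sing_family L A.
Proof.
by apply: (regular_image_up_to deq_refl deq_trans rcat_deq _ rcat_sing (proj2_sig L)).
Qed.

Definition bigcup (A : RegLang k -> Prop) : lang k :=
  fun w => exists2 a, A a & proj1_sig a w.

Lemma regular_bigcup A : dregular (RDelta k) A -> regular_lang (bigcup A).
Proof.
elim=> {A} [l | A B _ hA _ hB | A B _ hA _ hB | A _ hA | A B _ hA hAB].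
- elim: l => [|a l IH].
    by apply: (reg_ext (reg_lzero k)) => w; split=> // -[].
  apply: (reg_ext (reg_lunion (proj2_sig a) IH)) => w; split.
    by case=> [hw | [b hb hw]]; [exists a; first left | exists b; first right].
  by case=> b [<- | hb] hw; [left | right; exists b].
- apply: (reg_ext (reg_lunion hA hB)) => w; split.
    by case=> -[a ha hw]; exists a => //; [left | right].
  by case=> a [ha | ha] hw; [left | right]; exists a.
- apply: (reg_ext (reg_lcat hA hB)) => w; split.
    case=> u [v [[a ha hu] [[b hb hv] ->]]].
    by exists (rcat a b); [exists a, b | exists u, v].
  case=> _ [a [b [ha [hb ->]]]] [u [v [hu [hv ->]]]].
  by exists u, v; split; [exists a | split; first exists b].
- apply: (reg_ext (reg_star hA)) => w; split.
    elim=> [|u v _ [a ha hu] [b hb hv]]; first by exists (rone k); first exact: star_one.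
    by exists (rcat a b); [apply: star_mul | exists u, v].
  case=> a ha; elim: ha w => [|x b _ IH hb] w; first by move=> ->; apply: star_one.
  by case=> u [v [/IH hu [hv ->]]]; apply: star_mul => //; exists b.
- by apply: (reg_ext hA) => w; split=> -[a /hAB ha hw]; exists a.
Qed.

Definition bigcupR A (hA : dregular (RDelta k) A) : RegLang k :=
  exist _ (bigcup A) (regular_bigcup hA).

Lemma dle_RDeltaE L M :
  dle (RDelta k) L M <-> forall w, proj1_sig L w -> proj1_sig M w.
Proof.
split=> [h w hw | h w]; first by apply/h; left.
by split=> [[/h|] | hw] //; right.
Qed.

Lemma RDelta_supE A s : dregular (RDelta k) A -> is_sup (RDelta k) A s ->
  forall w, proj1_sig s w <-> bigcup A w.
Proof.
move=> hA [s_ub s_least] w; split; last by case=> a /s_ub /dle_RDeltaE; apply.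
have /dle_RDeltaE : dle (RDelta k) s (bigcupR hA).
  by apply: s_least => a ha; apply/dle_RDeltaE => w' hw; exists a.
exact.
Qed.

Lemma sing_family_sup L A : sing_family L A ->
  is_sup (RDelta k) (fun a => A a \/ a = rzero k) L.
Proof.
case=> A_L L_A; split=> [a [/A_L [w hw aw] | ->] | u u_ub]; apply/dle_RDeltaE => //.
  by move=> w' /aw ->.
move=> w /L_A [a ha aw]; move/dle_RDeltaE: (u_ub a (or_introl ha)); apply.
by apply/aw.
Qed.

End Languages.

Section NormalForms.
Variable k : nat.
Implicit Types (L M : RegLang k) (u v w : word k).

(* [(u, v)] is the reduced word q_u p_v, and [None] represents 0. *)
Definition NF := (seq 'I_k * seq 'I_k)%type.

Definition nf_word (n : NF) : word k := map inr n.1 ++ map inl n.2.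

Definition nf_lmul (x : Delta k) (a : option NF) : option NF :=
  if a is Some (u, v) then
    match x, u with
    | inr j, _ => Some (j :: u, v)
    | inl i, [::] => Some ([::], i :: v)
    | inl i, j :: u' => if i == j then Some (u', v) else None
    end
  else None.

Definition nf w : option NF := foldr nf_lmul (Some ([::], [::])) w.

Definition nf_mul (a b : option NF) : option NF :=
  if a is Some n then foldr nf_lmul b (nf_word n) else None.

Lemma foldr_nf_lmul_None w : foldr nf_lmul None w = None.
Proof. by elim: w => //= x w ->. Qed.

Lemma nf_lmul_mul x a b : nf_lmul x (nf_mul a b) = nf_mul (nf_lmul x a) b.
Proof.
case: a => [[u v]|] //; case: x => [i|j] //; case: u => [|j u] //=.
case: eqP => [<- | /eqP/negbTE ne] /=; rewrite /nf_word;
  by case: (foldr _ _ _) => [[? ?]|] //=; rewrite ?eqxx ?ne.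
Qed.

Lemma nf_cat u v : nf (u ++ v) = nf_mul (nf u) (nf v).
Proof. by rewrite /nf foldr_cat; elim: u => //= x u ->; rewrite nf_lmul_mul. Qed.

Definition nfs L (n : NF) : Prop := exists2 w, proj1_sig L w & nf w = Some n.

Definition same_nfs L M : Prop := forall n, nfs L n <-> nfs M n.

Lemma nfs_sub L M : (forall w, proj1_sig L w -> proj1_sig M w) ->
  forall n, nfs L n -> nfs M n.
Proof. by move=> LM n [w /LM]; exists w. Qed.

Lemma deq_same_nfs L M : deq (RDelta k) L M -> same_nfs L M.
Proof. by move=> LM n; split; apply: nfs_sub => w /LM. Qed.

Lemma nfs_rzero n : nfs (rzero k) n <-> False.
Proof. by split=> // -[]. Qed.

Lemma nfs_rone n : nfs (rone k) n <-> n = ([::], [::]).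
Proof. by split=> [[_ -> [<-]] | ->] //; exists [::]. Qed.

Lemma nfs_sing w n : nfs (sing w) n <-> nf w = Some n.
Proof. by split=> [[_ -> //] | ]; exists w. Qed.

Lemma nfs_rcat_sing L M u v : deq (RDelta k) L (sing u) -> deq (RDelta k) M (sing v) ->
  forall n, nfs (rcat L M) n <-> nf (u ++ v) = Some n.
Proof.
by move=> Lu Mv n; rewrite (deq_same_nfs (deq_trans (rcat_deq Lu Mv) (rcat_sing u v))) nfs_sing.
Qed.

Lemma nfs_runion L M n : nfs (runion L M) n <-> nfs L n \/ nfs M n.
Proof.
split; first by case=> w [hw | hw] e; [left | right]; exists w.
by case=> -[w hw e]; exists w => //; [left | right].
Qed.

Lemma nfs_rcat L M n : nfs (rcat L M) n <->
  exists a b, [/\ nfs L a, nfs M b & nf_mul (Some a) (Some b) = Some n].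
Proof.
split.
  case=> _ [u [v [hu [hv ->]]]]; rewrite nf_cat.
  case Eu: (nf u) => [a|] //; case Ev: (nf v) => [b|]; last by rewrite /= foldr_nf_lmul_None.
  by exists a, b; split=> //; [exists u | exists v].
case=> a [b [[u hu Eu] [v hv Ev] e]].
by exists (u ++ v); [exists u, v | rewrite nf_cat Eu Ev].
Qed.

End NormalForms.

Arguments nf_lmul {k} x a.

Section SameNormalForms.
Variable k : nat.
Implicit Types (L M : RegLang k) (w : word k).

Lemma nfs_sup_sub A B s t : dregular (RDelta k) A ->
  (forall x, (exists a, A a /\ same_nfs (runion x a) a) ->
             (exists b, B b /\ same_nfs (runion x b) b)) ->
  is_sup (RDelta k) A s -> is_sup (RDelta k) B t ->
  forall n, nfs s n -> nfs t n.
Proof.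
move=> hA AB hs [t_ub _] n [w /(RDelta_supE hA hs) [a ha hw] e].
have [b [hb ab]] : exists b, B b /\ same_nfs (runion a b) b.
  by apply: AB; exists a; split=> // n'; rewrite nfs_runion; split=> [[] |]; auto.
have [w' hw' e'] : nfs b n by apply/ab/nfs_runion; left; exists w.
by exists w' => //; move/dle_RDeltaE: (t_ub b hb); apply.
Qed.

Lemma same_nfs_Rcong : is_Rcong (RDelta k) (@same_nfs k).
Proof.
split; first exact: deq_same_nfs.
split; first by [].
split; first by move=> L M h n; rewrite h.
split; first by move=> L M N h1 h2 n; rewrite h1 h2.
split; first by move=> L L' M M' h1 h2 n; rewrite !nfs_runion h1 h2.
split.
  move=> L L' M M' h1 h2 n; rewrite !nfs_rcat.
  by split=> -[a [b [/h1 ha /h2 hb e]]]; exists a, b.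
move=> A B hA hB AB s t hs ht n.
by split; [apply: (nfs_sup_sub hA _ hs ht) | apply: (nfs_sup_sub hB _ ht hs)] => x;
  case: (AB x).
Qed.

Lemma same_nfs_relation (i j : 'I_k) :
  same_nfs (rcat (rp i) (rq j)) (if i == j then rone k else rzero k).
Proof.
move=> n; rewrite (nfs_rcat_sing (rletter_sing _) (rletter_sing _)) /=.
by case: eqP => _; rewrite ?nfs_rone ?nfs_rzero //; split=> [[<-] | ->].
Qed.

Lemma rho_same_nfs L M : rho L M -> same_nfs L M.
Proof. by apply; [apply: same_nfs_Rcong | apply: same_nfs_relation]. Qed.

End SameNormalForms.

Section RCongruence.
Variables (D : sdioid) (R : car D -> car D -> Prop).
Hypothesis R_cong : is_Rcong D R.

Lemma Rcong_downward_sub (A B : car D -> Prop) :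
  (forall a, A a -> exists2 b, B b & R a b) ->
  forall x, (exists a, A a /\ R (dadd D x a) a) -> exists b, B b /\ R (dadd D x b) b.
Proof.
case: R_cong => _ [R_refl [R_sym [R_trans [R_add _]]]].
move=> AB x [a [/AB [b hb ab] xa]]; exists b; split=> //.
exact: R_trans (R_add _ _ _ _ (R_refl x) (R_sym _ _ ab)) (R_trans _ _ _ xa ab).
Qed.

End RCongruence.

Section PolycyclicCongruence.
Variable k : nat.
Implicit Types (L M : RegLang k) (w : word k).

Definition snf w : RegLang k := if nf w is Some n then sing (nf_word n) else rzero k.

Variable R : RegLang k -> RegLang k -> Prop.
Hypothesis R_cong : is_Rcong (RDelta k) R.
Hypothesis R_rel : forall i j : 'I_k,
  R (rcat (rp i) (rq j)) (if i == j then rone k else rzero k).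

Let R_deq : forall L M, deq (RDelta k) L M -> R L M.
Proof. by case: R_cong. Qed.
Let R_refl : forall L, R L L.
Proof. by case: R_cong => _ []. Qed.
Let R_sym : forall L M, R L M -> R M L.
Proof. by case: R_cong => _ [_ []]. Qed.
Let R_trans : forall L M N, R L M -> R M N -> R L N.
Proof. by case: R_cong => _ [_ [_ []]]. Qed.
Let R_mul : forall L L' M M', R L L' -> R M M' -> R (rcat L M) (rcat L' M').
Proof. by case: R_cong => _ [_ [_ [_ [_ []]]]]. Qed.

Lemma R_letter_snf x w : R (rcat (sing [:: x]) (snf w)) (snf (x :: w)).
Proof.
rewrite /snf /=; case: (nf w) => [[[|j u] v]|]; last exact/R_deq/rcat0r.
  by case: x => [i|j]; apply/R_deq/rcat_sing.
case: x => [i|j']; last by apply/R_deq/rcat_sing.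
set rest := nf_word (u, v).
have pq_rest : deq (RDelta k) (rcat (sing [:: inl i]) (sing (inr j :: rest)))
                              (rcat (rcat (rp i) (rq j)) (sing rest)).
  apply: deq_trans (rcat_sing _ _) (deq_sym _).
  exact: deq_trans (rcat_deq (rcat_sing [:: inl i] [:: inr j]) (deq_refl _)) (rcat_sing _ _).
apply: R_trans (R_deq pq_rest) (R_trans (R_mul (R_rel i j) (R_refl _)) _).
by case E: (i == j); rewrite /= E; apply: R_deq; [apply: rcat1l | apply: rcat0l].
Qed.

Lemma R_sing_snf w : R (sing w) (snf w).
Proof.
elim: w => [|x w IH]; first exact: R_refl.
apply: R_trans (R_deq (deq_sym (rcat_sing [:: x] w))) _.
exact: R_trans (R_mul (R_refl _) IH) (R_letter_snf x w).
Qed.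

Lemma sing_family_R_sub L M A B : (forall n, nfs L n -> nfs M n) ->
  sing_family L A -> sing_family M B ->
  forall a, A a \/ a = rzero k -> exists2 b, B b \/ b = rzero k & R a b.
Proof.
move=> LM [A_L _] [_ M_B] a [/A_L [w hw aw] | ->]; last by exists (rzero k); [right | ].
have a_snf : R a (snf w) by apply: R_trans (R_deq aw) (R_sing_snf w).
move: a_snf; rewrite /snf; case e: (nf w) => [n|] a_snf; last by exists (rzero k); [right | ].
have [w' hw' e'] : nfs M n by apply: LM; exists w.
have [b hb bw'] := M_B w' hw'; exists b; first by left.
apply: R_trans a_snf (R_sym (R_trans (R_deq bw') _)).
by move: (R_sing_snf w'); rewrite /snf e'.
Qed.

Lemma same_nfs_R L M : same_nfs L M -> R L M.
Proof.
case: R_cong => _ [_ [_ [_ [_ [_ R_sup]]]]] LM.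
have [A hA LA] := regular_sing_family L; have [B hB MB] := regular_sing_family M.
(* 0 joins both families so that a word whose normal form is 0 has a partner. *)
have with_zero C : dregular (RDelta k) C -> dregular (RDelta k) (fun c => C c \/ c = rzero k).
  move=> hC; apply: (reg_ext (reg_union hC (reg_fin _ _ [:: rzero k]))) => c.
  by split=> [[hc | [<- | []]] | [hc | ->]]; [left | right | left | right; left].
apply: (R_sup _ _ (with_zero _ hA) (with_zero _ hB)); try exact: sing_family_sup.
move=> x; split; apply: (Rcong_downward_sub R_cong).
  by apply: (sing_family_R_sub _ LA MB) => n /LM.
by apply: (sing_family_R_sub _ MB LA) => n /LM.
Qed.

End PolycyclicCongruence.

Lemma rhoE k (L M : RegLang k) : rho L M <-> same_nfs L M.
Proof.
split; first exact: rho_same_nfs.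
by move=> LM R R_cong R_rel; apply: same_nfs_R.
Qed.

Section CprimeOrder.
Variable k : nat.
Implicit Types (L M s : RegLang k) (A : RegLang k -> Prop).

Lemma rho_deq L M : deq (RDelta k) L M -> rho L M.
Proof. by move=> LM; apply/rhoE/deq_same_nfs. Qed.

Lemma dle_CprimeE L M : dle (Cprime k) L M <-> forall n, nfs L n -> nfs M n.
Proof.
rewrite /dle /= rhoE; split=> [LM n hn | LM n]; first by apply/LM/nfs_runion; left.
by rewrite nfs_runion; split=> [[/LM |] | ] //; right.
Qed.

Lemma is_sup_Cprime A s : (forall n, nfs s n <-> exists2 a, A a & nfs a n) ->
  is_sup (Cprime k) A s.
Proof.
move=> sE; split=> [a ha | u u_ub]; apply/dle_CprimeE => n; first by move=> hn; apply/sE; exists a.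
by case/sE=> a /u_ub /dle_CprimeE; apply.
Qed.

Lemma Cprime_supE A s : dregular (Cprime k) A -> is_sup (Cprime k) A s ->
  forall n, nfs s n <-> exists2 a, A a & nfs a n.
Proof.
move=> hA [s_ub s_least] n; split; last by case=> a /s_ub /dle_CprimeE; apply.
have /dle_CprimeE s_sub : dle (Cprime k) s (bigcupR hA).
  by apply: s_least => a ha; apply/dle_CprimeE/nfs_sub => w hw; exists a.
by case/s_sub=> w [a ha hw] e; exists a => //; exists w.
Qed.

End CprimeOrder.

Section Encoding.
Variable m : nat.
Implicit Types (L M : RegLang m) (u v w : word m).

Definition code (j : 'I_m) : seq 'I_2 := ord_max :: nseq j ord0 ++ [:: ord_max].

Definition enc (x : Delta m) : word 2 :=
  match x with inl i => map inl (code i) | inr j => map inr (code j) end.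

Definition encw w : word 2 := flatten (map enc w).

Definition encN (n : NF m) : NF 2 := (flatten (map code n.1), flatten (map code n.2)).

Lemma encw_cat u v : encw (u ++ v) = encw u ++ encw v.
Proof. by rewrite /encw map_cat flatten_cat. Qed.

Lemma foldr_nf_lmul_inr (l U V : seq 'I_2) :
  foldr nf_lmul (Some (U, V)) (map inr l) = Some (l ++ U, V).
Proof. by elim: l => //= x l ->. Qed.

Lemma foldr_nf_lmul_inl (l V : seq 'I_2) :
  foldr nf_lmul (Some ([::], V)) (map inl l) = Some ([::], l ++ V).
Proof. by elim: l => //= x l ->. Qed.

Lemma foldr_nf_lmul_p0 (i j : nat) (U V : seq 'I_2) :
  foldr nf_lmul (Some (nseq j ord0 ++ ord_max :: U, V)) (map inl (nseq i ord0)) =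
  if i <= j then Some (nseq (j - i) ord0 ++ ord_max :: U, V) else None.
Proof.
elim: i => [|i IH]; first by rewrite subn0.
rewrite /= IH; case: (ltngtP i j) => [lt_ij | // | <-]; last by rewrite subnn.
by rewrite -subnSK.
Qed.

Lemma foldr_nf_lmul_code (i j : 'I_m) (U V : seq 'I_2) :
  foldr nf_lmul (Some (code j ++ U, V)) (map inl (code i)) =
  if i == j then Some (U, V) else None.
Proof.
rewrite /code /= map_cat foldr_cat /= -catA /= foldr_nf_lmul_p0.
case: (ltngtP i j) => [lt_ij | lt_ji | /val_inj ->]; last by rewrite subnn eqxx.
- by rewrite -subnSK //=; case: eqP => // eq_ij; rewrite eq_ij ltnn in lt_ij.
- by case: eqP => // eq_ij; rewrite eq_ij ltnn in lt_ji.
Qed.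

Lemma nf_encw w : nf (encw w) = omap encN (nf w).
Proof.
elim: w => [|x w IH] //; rewrite /encw /= /nf foldr_cat -/(nf _) -/(encw w) IH /= -/(nf w).
case: (nf w) => [[u v]|] /=; last by rewrite foldr_nf_lmul_None.
case: x => [i|j]; last exact: foldr_nf_lmul_inr.
case: u => [|j u]; first exact: foldr_nf_lmul_inl.
by rewrite (foldr_nf_lmul_code i j (flatten (map code u)) (flatten (map code v))); case: eqP.
Qed.

Lemma flatten_code_inj : injective (fun u : seq 'I_m => flatten (map code u)).
Proof.
have nseq_inj a b (r r' : seq 'I_2) :
    nseq a ord0 ++ ord_max :: r = nseq b ord0 ++ ord_max :: r' -> a = b /\ r = r'.
  by elim: a b => [|a IH] [|b] //= => [[->] | [/IH [-> ->]]].
by elim=> [|i u IH] [|j u'] //=; rewrite -!catA /= => -[/nseq_inj [/val_inj -> /IH ->]].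
Qed.

Lemma encN_inj : injective encN.
Proof. by case=> [u v] [u' v'] [/flatten_code_inj -> /flatten_code_inj ->]. Qed.

Definition encode L : RegLang 2 :=
  exist _ (fun w' : word 2 => exists2 w, proj1_sig L w & w' = encw w)
          (regular_image encw_cat erefl (proj2_sig L)).

Lemma nfs_encode L n : nfs (encode L) n <-> exists2 n0, nfs L n0 & n = encN n0.
Proof.
split=> [[_ [w hw ->]] | [n0 [w hw e] ->]].
  by rewrite nf_encw; case e: (nf w) => [n0|] //= [<-]; exists n0 => //; exists w.
by exists (encw w); [exists w | rewrite nf_encw e].
Qed.

Lemma encode_letter x : deq (RDelta 2) (encode (rletter x)) (sing (encw [:: x])).
Proof. by move=> w; split=> [[_ -> ->] | ->] //; exists [:: x]. Qed.

Lemma encode_rzero : deq (RDelta 2) (encode (rzero m)) (rzero 2).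
Proof. by move=> w'; split=> // -[]. Qed.

Lemma encode_rone : deq (RDelta 2) (encode (rone m)) (rone 2).
Proof. by move=> w'; split=> [[_ -> ->] | ->] //; exists [::]. Qed.

Lemma encode_runion L M :
  deq (RDelta 2) (encode (runion L M)) (runion (encode L) (encode M)).
Proof.
move=> w'; split=> [[u [hu | hu] ->] | [[u hu ->] | [u hu ->]]];
  by [left; exists u | right; exists u | exists u; [left | ] | exists u; [right | ]].
Qed.

Lemma encode_rcat L M : deq (RDelta 2) (encode (rcat L M)) (rcat (encode L) (encode M)).
Proof.
move=> w'; split=> [[_ [u [v [hu [hv ->]]]] ->] | [_ [_ [[u hu ->] [[v hv ->] ->]]]]].
  by exists (encw u), (encw v); rewrite encw_cat; split; [exists u | split; first exists v].
by exists (u ++ v); [exists u, v | rewrite encw_cat].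
Qed.

Lemma encode_R_morphism : R_morphism (Cprime m) (Cprime 2) encode.
Proof.
split.
  move=> L M /rhoE LM; apply/rhoE => n; rewrite !nfs_encode.
  by split=> -[n0 /LM]; exists n0.
split; first exact: rho_deq encode_rzero.
split; first exact: rho_deq encode_rone.
split; first by move=> L M; apply: rho_deq (encode_runion L M).
split; first by move=> L M; apply: rho_deq (encode_rcat L M).
move=> A s hA hs; apply: is_sup_Cprime => n; rewrite nfs_encode; split.
  case=> n0 /(Cprime_supE hA hs) [a ha hn0] ->.
  by exists (encode a); [exists a | apply/nfs_encode; exists n0].
case=> _ [a [ha ->]] /nfs_encode [n0 hn0 ->].
by exists n0 => //; apply/(Cprime_supE hA hs); exists a.
Qed.

Lemma encode_injective : d_injective (Cprime m) (Cprime 2) encode.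
Proof.
move=> L M /rhoE LM; apply/rhoE => n.
have enc_nfs N : nfs N n <-> nfs (encode N) (encN n).
  by rewrite nfs_encode; split=> [hn | [n0 hn0 /encN_inj ->]] //; exists n.
by rewrite !enc_nfs LM.
Qed.

Lemma encode_relation i j :
  rho (rcat (encode (rp i)) (encode (rq j))) (if i == j then rone 2 else rzero 2).
Proof.
apply/rhoE => n; rewrite (nfs_rcat_sing (encode_letter _) (encode_letter _)) -encw_cat nf_encw.
by case E: (i == j); rewrite /= E ?nfs_rone ?nfs_rzero //; split=> [[<-] | ->].
Qed.

Lemma p0_encode_q j : rho (rcat (rp ord0) (encode (rq j))) (rzero 2).
Proof.
apply/rhoE => n; rewrite (nfs_rcat_sing (rletter_sing _) (encode_letter _)).
by rewrite nfs_rzero nf_cat nf_encw.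
Qed.

Lemma encode_p_q0 i : rho (rcat (encode (rp i)) (rq ord0)) (rzero 2).
Proof.
apply/rhoE => n; rewrite (nfs_rcat_sing (encode_letter _) (rletter_sing _)).
by rewrite nfs_rzero nf_cat nf_encw /= cats0 /code /= map_cat foldr_cat /= foldr_nf_lmul_None.
Qed.

End Encoding.

Theorem lemma1 (m : nat) (hm : (2 <= m)%N) :
  exists g : RegLang m -> RegLang 2,
    R_morphism (Cprime m) (Cprime 2) g /\
    d_injective (Cprime m) (Cprime 2) g /\
    (forall i j : 'I_m,
       rho (rcat (g (rp i)) (g (rq j))) (if i == j then rone 2 else rzero 2) /\
       rho (rcat (rp (ord0 : 'I_2)) (g (rq j))) (rzero 2) /\
       rho (rcat (g (rp i)) (rq (ord0 : 'I_2))) (rzero 2)).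
Proof.
(* The encoding needs no lower bound on [m]. *)
exists (@encode m); split; first exact: encode_R_morphism.
split; first exact: encode_injective.
by move=> i j; split; [apply: encode_relation | split; [apply: p0_encode_q | apply: encode_p_q0]].
Qed.
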